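(* Let $k\ge 1$, let $G=K_2\vee\overline{K_k}$, and let $v$ be a vertex of maximum degree in $G$. If $p\ge\max\{3,\Delta(G)\}$, then $G$ is $f_{p,v}$-edge-orientable.
   Context: $G_1\vee G_2$ denotes the join: the disjoint union of $G_1$ and $G_2$ plus all edges between them. $\overline{K_k}$ is the edgeless graph on $k$ vertices. An orientation of a graph $H$ is any digraph obtained by replacing each edge $uv$ with the arc $(u,v)$, with the arc $(v,u)$, or with both arcs. A kernel of a digraph $D$ is an independent set $S$ such that every vertex of $D-S$ has an out-neighbor in $S$. $D$ is kernel-perfect if every induced subdigraph of $D$ has a kernel. For $f:V(H)\to\mathbb{N}$, an orientation $D$ of $H$ is $f$-kernel-perfect if it is kernel-perfect and $f(v)\ge 1+d^+_D(v)$ for all $v$. For $f:E(G)\to\mathbb{N}$, $G$ is $f$-edge-orientable if its line graph $L(G)$ admits an $f$-kernel-perfect orientation. For $v\in V(G)$, define $f_{p,v}:E(G)\to\mathbb{N}$ by $f_{p,v}(e)=d_G(v)$ if $e$ is incident to $v$, and $f_{p,v}(e)=p$ otherwise. *)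

From mathcomp Require Import all_boot.
Unset Printing Implicit Defensive.

Definition simple_graph {V : finType} (adj : rel V) : Prop :=
  (forall x, ~~ adj x x) /\ (forall x y, adj x y = adj y x).

Definition deg {V : finType} (adj : rel V) (v : V) : nat := #|[set w | adj v w]|.

Definition maxdeg {V : finType} (adj : rel V) : nat := \max_(w : V) deg adj w.

Definition gjoin {V1 V2 : finType} (adj1 : rel V1) (adj2 : rel V2) : rel (V1 + V2)%type :=
  fun x y => match x, y with
             | inl a, inl b => adj1 a b
             | inr a, inr b => adj2 a b
             | _, _ => true
             end.

Definition K2 : rel bool := fun x y => x != y.
Definition edgeless (k : nat) : rel 'I_k := fun _ _ => false.

Definition Gk (k : nat) : rel (bool + 'I_k)%type := gjoin K2 (edgeless k).

Definition is_edge {V : finType} (adj : rel V) (e : {set V}) : bool :=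
  [exists x, exists y, adj x y && (e == [set x; y])].

Definition edge {V : finType} (adj : rel V) := {e : {set V} | is_edge adj e}.

Definition line_graph {V : finType} (adj : rel V) : rel (edge adj) :=
  fun e f => (e != f) && (val e :&: val f != set0).

(* A digraph on T is an arc relation [D : rel T]; D u v means the arc (u,v). *)

Definition orientation {T : finType} (H D : rel T) : Prop :=
  (forall u v, D u v -> H u v) /\ (forall u v, H u v -> D u v || D v u).

Definition kernel_of {T : finType} (D : rel T) (A S : {set T}) : Prop :=
  S \subset A /\
  (forall u v, u \in S -> v \in S -> ~~ D u v) /\
  (forall u, u \in A -> u \notin S -> exists2 w, w \in S & D u w).

Definition kernel_perfect {T : finType} (D : rel T) : Prop :=
  forall A : {set T}, exists S : {set T}, kernel_of D A S.

Definition outdeg {T : finType} (D : rel T) (v : T) : nat := #|[set w | D v w]|.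

Definition f_kernel_perfect_orientation {T : finType} (H : rel T) (f : T -> nat)
  (D : rel T) : Prop :=
  orientation H D /\ kernel_perfect D /\ (forall v, 1 + outdeg D v <= f v).

Definition f_edge_orientable {V : finType} (adj : rel V) (f : edge adj -> nat) : Prop :=
  exists D : rel (edge adj), f_kernel_perfect_orientation (line_graph adj) f D.

Definition f_pv {V : finType} (adj : rel V) (p : nat) (v : V) : edge adj -> nat :=
  fun e => if v \in val e then deg adj v else p.

(* Identify the edges of G with [option (bool * 'I_k)]: [None] is the edge of K_2 and
   [Some (t, i)] joins [inl t] to [inr i].  For v = inl a write x_i = Some (a, i),
   y_i = Some (~~ a, i) and N = None; the budgets ask for outdegree at most k at N and
   at the x_i, and at most max(2, k) at the y_i.  Orient the line graph downwards along
     y_(k-1) < ... < y_2 < N < y_0 < y_1 < x_(k-1) < ... < x_0,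
   except that the edge x_0 y_0 points to x_0.  Every vertex then has a neighbour it does
   not point to, which gives the outdegree bounds.  The only directed cycle is
   x_0 x_1 y_1 y_0: an induced subdigraph either has a sink (its lowest vertex, or else its
   lowest x) or is that cycle, with kernel {x_0, y_1}; removing sinks one at a time then
   builds kernels.  For v = inr i, maximality of v forces
   k = 1, G is a triangle and an acyclic orientation suffices. *)

From mathcomp Require Import all_boot zify.

Set Implicit Arguments.
Unset Strict Implicit.
Unset Printing Implicit Defensive.

Section Kernels.
Variable T : finType.
Implicit Types (D H : rel T) (A S : {set T}).

(* Induction on |A|: a sink s of D[A] extends any kernel of D[A \ ({s} u N^-(s))]. *)
Lemma kernel_perfect_of_sink_or_kernel D :
  (forall A, A != set0 ->
     (exists2 s, s \in A & forall w, w \in A -> ~~ D s w) \/ exists S, kernel_of D A S) ->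
  kernel_perfect D.
Proof.
move=> sink_or_kernel A.
have [n] := ubnP #|A|; elim: n A => // n IHn A leA.
have [->|nA] := eqVneq A set0.
  by exists set0; split; [exact: sub0set | split => // u; rewrite inE].
have [[s sA sink_s]|//] := sink_or_kernel A nA.
set A' := A :\: (s |: [set u in A | D u s]).
have ltA' : #|A'| < n.
  rewrite ltnS in leA; apply: leq_trans leA; apply: proper_card; apply/properP; split.
    by apply/subsetP => u; rewrite inE => /andP[].
  by exists s => //; rewrite !inE eqxx.
have [S' [sS'A' [indS' absS']]] := IHn A' ltA'.
have S'A u : u \in S' -> [&& u != s, ~~ D u s & u \in A].
  by move/(subsetP sS'A'); rewrite !inE negb_or -andbA; case: (u \in A); rewrite ?andbF.
exists (s |: S'); split; [|split].
- apply/subsetP => u; rewrite in_setU1 => /orP[/eqP->//|/S'A].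
  by case/and3P.
- move=> u w; rewrite !in_setU1 => /orP[/eqP->|uS'] /orP[/eqP->|wS'].
  + exact: sink_s.
  + by apply: sink_s; case/and3P: (S'A w wS').
  + by case/and3P: (S'A u uS').
  + exact: indS'.
- move=> u uA; rewrite in_setU1 negb_or => /andP[us uS'].
  have [Dus|nDus] := boolP (D u s); first by exists s; rewrite ?setU11.
  have uA' : u \in A' by rewrite !inE negb_or us uA nDus.
  have [w wS' Duw] := absS' u uA' uS'.
  by exists w; rewrite ?in_setU1 ?wS' ?orbT.
Qed.

Lemma rank_kernel_perfect D (r : T -> nat) :
  (forall c d, D c d -> r d < r c) -> kernel_perfect D.
Proof.
move=> Dr; apply: kernel_perfect_of_sink_or_kernel => A /set0Pn[c0 c0A]; left.
have [m mA m_min] := arg_minnP r c0A.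
by exists m => // w /m_min; apply: contraL => /Dr; rewrite -ltnNge.
Qed.

Lemma rank_orientation H (r : T -> nat) :
  (forall c d, H c d -> H d c) -> (forall c d, H c d -> r c != r d) ->
  orientation H [rel c d | H c d && (r d < r c)].
Proof.
move=> Hsym Hr; split=> [c d /andP[] //|c d Hcd] /=.
by rewrite Hcd (Hsym _ _ Hcd) /= -neq_ltn eq_sym Hr.
Qed.

Lemma outdeg_le_nbrs D H c :
  (forall d, D c d -> H c d) -> outdeg D c <= #|[set d | H c d]|.
Proof.
by move=> DH; apply/subset_leq_card/subsetP => d; rewrite !inE => /DH.
Qed.

Lemma outdeg_lt_nbrs D H c z :
  (forall d, D c d -> H c d) -> H c z -> ~~ D c z -> outdeg D c < #|[set d | H c d]|.
Proof.
move=> DH Hz nDz; apply/proper_card/properP; split.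
  by apply/subsetP => d; rewrite !inE => /DH.
by exists z; rewrite !inE.
Qed.

End Kernels.

Section Relabel.
Variables (T U : finType) (phi : U -> T) (psi : T -> U).
Hypotheses (phiK : cancel phi psi) (psiK : cancel psi phi).

Definition relabel (R : rel U) : rel T := fun e g => R (psi e) (psi g).

Lemma orientation_relabel (H : rel T) (H' R : rel U) :
  (forall c d, H (phi c) (phi d) = H' c d) -> orientation H' R -> orientation H (relabel R).
Proof.
move=> HH' [RH' H'R]; split=> [e g|e g].
  by move/RH'; rewrite -HH' !psiK.
by rewrite -{1}(psiK e) -{1}(psiK g) HH' => /H'R.
Qed.

Lemma kernel_perfect_relabel (R : rel U) : kernel_perfect R -> kernel_perfect (relabel R).
Proof.
move=> kpR A; have [S [SA [indS absS]]] := kpR (psi @: A).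
exists (phi @: S); split; [|split].
- apply/subsetP => _ /imsetP[c /(subsetP SA)/imsetP[e eA ->] ->].
  by rewrite psiK.
- by move=> _ _ /imsetP[c cS ->] /imsetP[d dS ->]; rewrite /relabel !phiK; apply: indS.
- move=> e eA eS.
  have [|c cS Rec] := absS (psi e) (imset_f psi eA).
    by apply: contra eS => /(imset_f phi); rewrite psiK.
  by exists (phi c); [apply: imset_f | rewrite /relabel phiK].
Qed.

Lemma outdeg_relabel (R : rel U) e : outdeg (relabel R) e = outdeg R (psi e).
Proof.
rewrite /outdeg -(card_imset _ (can_inj phiK)); apply: eq_card => g.
rewrite inE; apply/idP/imsetP => [Reg|[c]].
  by exists (psi g); rewrite ?inE ?psiK.
by rewrite inE => Rec ->; rewrite /relabel phiK.
Qed.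

End Relabel.

Section LineGraph.
Variable k : nat.

Definition code := option (bool * 'I_k).

Definition ends (c : code) : {set bool + 'I_k} :=
  if c is Some (t, i) then [set inl t; inr i] else [set inl true; inl false].

Lemma ends_edge c : is_edge (Gk k) (ends c).
Proof.
apply/existsP; case: c => [[t i]|].
  by exists (inl t); apply/existsP; exists (inr i); rewrite /= eqxx.
by exists (inl true); apply/existsP; exists (inl false); rewrite /= eqxx.
Qed.

Definition edge_of (c : code) : edge (Gk k) := exist _ (ends c) (ends_edge c).

Lemma ends_inj : injective ends.
Proof.
move=> [[t i]|] [[t' j]|] //= /setP ends_eq.
- have := ends_eq (inr i); have := ends_eq (inl t); rewrite !inE /= !eqxx /=.
  by move=> /esym/orP[/eqP[->]|//] /esym/eqP[->].
- by have := ends_eq (inr i); rewrite !inE /= eqxx.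
- by have := ends_eq (inr j); rewrite !inE /= eqxx.
Qed.

Lemma ends_surj (e : edge (Gk k)) : exists c, ends c = val e.
Proof.
case: e => e /= /existsP[x /existsP[y /andP[]]].
case: x => [s|i]; case: y => [t|j] //= st /eqP ->.
- by exists None; move: st; rewrite /K2; case: s; case: t => //= _; rewrite setUC.
- by exists (Some (s, j)).
- by exists (Some (t, i)); rewrite /= setUC.
Qed.

Definition code_of (e : edge (Gk k)) : code := odflt None [pick c | ends c == val e].

Lemma edge_ofK : cancel edge_of code_of.
Proof.
move=> c; rewrite /code_of; case: pickP => [d /eqP /ends_inj -> //|/(_ c)].
by rewrite eqxx.
Qed.

Lemma code_ofK : cancel code_of edge_of.
Proof.
move=> e; apply: val_inj; rewrite /code_of; case: pickP => [d /eqP //|no_code].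
by have [c ce] := ends_surj e; have := no_code c; rewrite ce eqxx.
Qed.

Definition adj_code (c d : code) : bool :=
  (c != d) && match c, d with
              | Some (t, i), Some (t', j) => (t == t') || (i == j)
              | None, None => false
              | _, _ => true
              end.

Lemma adj_codeC c d : adj_code c d = adj_code d c.
Proof.
rewrite /adj_code eq_sym; case: c => [[t i]|]; case: d => [[t' j]|] //=.
by rewrite (eq_sym t) (eq_sym i).
Qed.

Lemma setI2_neq0 (T : finType) (p q r s : T) :
  ([set p; q] :&: [set r; s] != set0) = [|| p == r, p == s, q == r | q == s].
Proof.
apply/set0Pn/idP => [[x]|].
  by rewrite !inE => /andP[] /orP[] /eqP -> /orP[] /eqP ->; rewrite eqxx ?orbT.
by case/or4P=> /eqP ->; [exists r|exists s|exists r|exists s]; rewrite !inE !eqxx ?orbT.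
Qed.

Lemma line_graph_edge_of c d : line_graph (Gk k) (edge_of c) (edge_of d) = adj_code c d.
Proof.
rewrite /line_graph /adj_code (inj_eq (can_inj edge_ofK)).
by case: c => [[[] i]|]; case: d => [[[] j]|]; rewrite /= ?setI2_neq0 //= ?orbT ?orbF.
Qed.

Lemma card_adj_code_Some t i : #|[set d | adj_code (Some (t, i)) d]| <= k.+1.
Proof.
pose U := None |: (Some (~~ t, i) |: [set Some (t, j) | j in [set~ i]]).
apply: (@leq_trans #|U|).
  apply/subset_leq_card/subsetP => -[[t' j]|]; rewrite !inE //= => /andP[ne].
  case: (eqVneq t t') ne => [<- ne _|tt' _ /= /eqP ij].
    by apply/orP; right; apply/imsetP; exists j; rewrite // !inE; apply: contraNneq ne => ->.
  by clear U; rewrite ij; case: t t' tt' => -[] //= _; rewrite eqxx.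
rewrite !cardsU1.
apply: leq_trans (leq_add (leq_b1 _) (leq_add (leq_b1 _) (leq_imset_card _ _))) _.
by rewrite cardsC1 card_ord; have := ltn_ord i; lia.
Qed.

Lemma deg_inl t : deg (Gk k) (inl t) = k.+1.
Proof.
rewrite /deg.
have inr_inl s : (inl s \in inr @: [set: 'I_k]) = false by apply/imsetP => -[].
have -> : [set w | Gk k (inl t) w] = inl (~~ t) |: (inr @: [set: 'I_k]).
  apply/setP => -[s|j]; rewrite !inE /=; last by rewrite imset_f ?orbT.
  by rewrite inr_inl orbF /K2; case: s; case: t.
by rewrite cardsU1 card_imset ?cardsT ?card_ord ?inr_inl // => ? ? [].
Qed.

Lemma deg_inr i : deg (Gk k) (inr i) = 2.
Proof.
rewrite /deg.
have -> : [set w | Gk k (inr i) w] = [set inl true; inl false].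
  by apply/setP => -[[]|j]; rewrite !inE.
by rewrite cards2.
Qed.

End LineGraph.

Lemma bool_neq_negb (s t : bool) : s != t -> s = ~~ t.
Proof. by case: s t => -[]. Qed.

Lemma eqb_negbF (b : bool) : (b == ~~ b) = false.
Proof. by case: b. Qed.

Section InlOrientation.
Variables (k : nat) (a : bool).
Implicit Types (c d u w : code k) (A : {set code k}).

Definition xrow c : bool := if c is Some (t, _) then t == a else false.

Definition zero_column c d : bool :=
  match c, d with
  | Some (_, i), Some (_, j) => (i == 0 :> nat) && (j == 0 :> nat)
  | _, _ => false
  end.

Definition inl_rank c : nat :=
  match c with
  | None => k
  | Some (t, i) =>
      if t == a then k + k + 2 - i
      else if i == 0 :> nat then k.+1 else if i == 1 :> nat then k.+2 else k - i
  end.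

Definition inl_orient c d : bool :=
  adj_code c d && (if zero_column c d then xrow d else inl_rank d < inl_rank c).

Lemma inl_rank_inj : injective inl_rank.
Proof.
move=> [[t i]|] [[t' j]|] //= eq_rank.
- suff [ta ij] : (t == a) = (t' == a) /\ i = j :> nat.
    by rewrite (val_inj ij); clear eq_rank; move: ta; case: t t' a => [] [] [].
  move: eq_rank; have := ltn_ord i; have := ltn_ord j.
  case: (t == a); case: (t' == a);
  case: (eqVneq (i : nat) 0) => ?; case: (eqVneq (i : nat) 1) => ?;
  case: (eqVneq (j : nat) 0) => ?; case: (eqVneq (j : nat) 1) => ?; lia.
- move: eq_rank; have := ltn_ord i; case: (t == a);
  case: (eqVneq (i : nat) 0) => ?; case: (eqVneq (i : nat) 1) => ?; lia.
- move: eq_rank; have := ltn_ord j; case: (t' == a);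
  case: (eqVneq (j : nat) 0) => ?; case: (eqVneq (j : nat) 1) => ?; lia.
Qed.

Lemma zero_columnC c d : zero_column c d = zero_column d c.
Proof. by case: c d => [[t i]|] [[t' j]|] //=; rewrite andbC. Qed.

Lemma zero_column_adj c d : zero_column c d -> adj_code c d -> xrow d = ~~ xrow c.
Proof.
case: c d => [[t i]|] [[t' j]|] //= /andP[/eqP i0 /eqP j0].
have <- : i = j by apply: val_inj; rewrite /= i0 j0.
move=> /andP[ne _]; have tt' : t' != t by apply: contraNneq ne => ->.
by rewrite (bool_neq_negb tt'); case: (t) (a) => -[].
Qed.

Lemma inl_orient_orientation : orientation (@adj_code k) inl_orient.
Proof.
split=> [c d /andP[] // | c d cd].
rewrite /inl_orient cd adj_codeC cd zero_columnC /=; case: ifP => zc.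
  by rewrite (zero_column_adj zc) 1?adj_codeC //; case: (xrow d).
have : inl_rank c != inl_rank d.
  by apply: contraTneq cd => /inl_rank_inj ->; rewrite /adj_code eqxx.
by rewrite neq_ltn orbC.
Qed.

Lemma inl_orient_asym c d : inl_orient c d -> ~~ inl_orient d c.
Proof.
move=> /andP[cd]; rewrite /inl_orient zero_columnC; case: ifP => [zc xd|_ dc].
  by rewrite (zero_column_adj zc) 1?adj_codeC // xd andbF.
by rewrite ltnNge ltnW ?andbF.
Qed.

Lemma inl_orient_y0_x0 (i : 'I_k) :
  i == 0 :> nat -> inl_orient (Some (~~ a, i)) (Some (a, i)).
Proof.
move=> i0; rewrite /inl_orient /= i0 eqxx /adj_code /= eqxx !orbT !andbT.
by apply/eqP => -[]; case: (a).
Qed.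

Lemma inl_orient_column (j : 'I_k) :
  j != 0 :> nat -> inl_orient (Some (a, j)) (Some (~~ a, j)).
Proof.
move=> j0; rewrite /inl_orient /= (negbTE j0) andbF /adj_code /= eqxx !orbT andbT eqxx.
rewrite [~~ a == a]eq_sym eqb_negbF; apply/andP; split; first by apply/eqP => -[]; case: (a).
by have := ltn_ord j; move/eqP: j0; case: (eqVneq (j : nat) 1) => ? ? ?; lia.
Qed.

Lemma inl_orient_from_min m w : inl_rank m <= inl_rank w -> inl_orient m w ->
  exists2 i : 'I_k, i == 0 :> nat & m = Some (~~ a, i) /\ w = Some (a, i).
Proof.
move=> mw /andP[adj]; case: ifP => [zc xw|_]; last by rewrite ltnNge mw.
clear mw; case: m w zc adj xw => [[t i]|] [[t' j]|] //= /andP[i0 j0] adj /eqP tw.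
have ij : i = j by apply: val_inj; move/eqP: i0; move/eqP: j0 => /= -> ->.
subst t' j; exists i => //; split=> //; congr (Some (_, _)).
by apply: bool_neq_negb; apply: contraTneq adj => ->; rewrite /adj_code eqxx.
Qed.

Lemma inl_rank_gt u :
  k < inl_rank u -> xrow u \/ exists2 i : 'I_k, i <= 1 & u = Some (~~ a, i).
Proof.
case: u => [[t i]|] /=; last by rewrite ltnn.
have [->|ta] := eqVneq t a; first by left.
rewrite (bool_neq_negb ta) => r; right; exists i => //.
by move: r; case: (eqVneq (i : nat) 0) => ?; case: (eqVneq (i : nat) 1) => ?; lia.
Qed.

Section AboveY0.
Variables (A : {set code k}) (j : 'I_k).
Hypothesis above : forall u, u \in A -> k < inl_rank u.
Hypothesis xmin : forall u, u \in A -> xrow u -> inl_rank (Some (a, j)) <= inl_rank u.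

Lemma inl_orient_xmin_sink :
  ~~ ((j == 1 :> nat) && (Some (~~ a, j) \in A)) ->
  forall u, u \in A -> ~~ inl_orient (Some (a, j)) u.
Proof.
move=> no_y1 u uA; apply/negP => /andP[adj].
case: ifP => [zc|nzc]; first by rewrite (zero_column_adj zc adj) /= eqxx.
have [xu|[i i1 def_u]] := inl_rank_gt (above uA); first by rewrite ltnNge xmin.
subst u; move: adj; rewrite /adj_code /= eqb_negbF /= => /andP[_ /eqP ji]; subst i.
move: nzc no_y1; rewrite /= uA andbT andbb => /negbT j0.
by have := ltn_ord j; move/eqP: j0; move: i1; case: (eqVneq (j : nat) 1) => //; lia.
Qed.

Lemma inl_orient_kernel (i : 'I_k) :
  i == 0 :> nat -> j == 1 :> nat -> Some (a, i) \in A -> Some (~~ a, j) \in A ->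
  kernel_of inl_orient A [set Some (a, i); Some (~~ a, j)].
Proof.
move=> /eqP i0 /eqP j1 xA yA; split; [|split].
- by apply/subsetP => u; rewrite !inE => /orP[] /eqP ->.
- move=> u w; rewrite !inE => /orP[] /eqP -> /orP[] /eqP ->;
    apply: contraTN isT => /andP[+ _]; rewrite /adj_code /= ?eqxx ?eqb_negbF //.
  + by rewrite -val_eqE /= i0 j1 andbF.
  + by rewrite [~~ a == a]eq_sym eqb_negbF -val_eqE /= i0 j1 andbF.
- move=> u uA; rewrite !inE negb_or => /andP[ux uy].
  have [xu|[l l1 def_u]] := inl_rank_gt (above uA).
    case: u xu uA ux uy => [[t l]|] //= /eqP -> uA ux _.
    have ->: l = j.
      apply: val_inj; have := xmin uA; rewrite /= !eqxx; have := ltn_ord l; have := ltn_ord j.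
      have : l != i by apply: contraNneq ux => ->.
      by rewrite -val_eqE /= i0; lia.
    by exists (Some (~~ a, j)); rewrite ?inE ?eqxx ?orbT // inl_orient_column // j1.
  subst u; have ->: l = i.
    apply: val_inj; have : l != j by apply: contraNneq uy => ->.
    by rewrite -val_eqE /= j1 i0; lia.
  by exists (Some (a, i)); rewrite ?inE ?eqxx // inl_orient_y0_x0 // i0.
Qed.

End AboveY0.

Lemma inl_orient_kernel_perfect : kernel_perfect inl_orient.
Proof.
apply: kernel_perfect_of_sink_or_kernel => A /set0Pn[c0 c0A].
have [m mA m_min] := arg_minnP inl_rank c0A.
case: (pickP [pred w | (w \in A) && inl_orient m w]) => [w /andP[wA mw]|m_sink]; last first.
  by left; exists m => // w wA; have := m_sink w; rewrite /= wA /= => ->.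
have [i i0 [def_m def_w]] := inl_orient_from_min (m_min w wA) mw.
have above u : u \in A -> k < inl_rank u.
  move/m_min => mu; apply: leq_trans mu.
  by rewrite def_m /= [~~ a == a]eq_sym eqb_negbF i0.
have wX : (w \in A) && xrow w by rewrite wA def_w /= eqxx.
have [x /andP[xA xX] x_min] := arg_minnP (P := fun u => (u \in A) && xrow u) inl_rank wX.
case: x xX xA x_min => [[t j]|] // /eqP -> xA x_min.
have xmin u : u \in A -> xrow u -> inl_rank (Some (a, j)) <= inl_rank u.
  by move=> uA xu; apply: x_min; rewrite /= uA.
have [/andP[j1 yA]|no_y1] := boolP ((j == 1 :> nat) && (Some (~~ a, j) \in A)).
  right; exists [set Some (a, i); Some (~~ a, j)].
  by apply: inl_orient_kernel; rewrite // -def_w.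
by left; exists (Some (a, j)) => // u; exact: inl_orient_xmin_sink.
Qed.

Lemma inl_orient_outdeg_in t i z :
  inl_orient z (Some (t, i)) -> outdeg inl_orient (Some (t, i)) <= k.
Proof.
move=> z_in; rewrite -ltnS; apply: leq_trans (card_adj_code_Some t i).
apply: (@outdeg_lt_nbrs _ inl_orient (@adj_code k) _ z) => [d /andP[] //||].
  by rewrite adj_codeC; case/andP: z_in.
exact: inl_orient_asym.
Qed.

Lemma inl_orient_outdeg_None : outdeg inl_orient None <= k.
Proof.
apply: leq_trans (_ : #|[set Some (~~ a, j) | j : 'I_k]| <= k); last first.
  by apply: leq_trans (leq_imset_card _ _) _; rewrite card_ord.
apply/subset_leq_card/subsetP => -[[t j]|]; rewrite inE /inl_orient //=.
have [->|ta] := eqVneq t a; first by have := ltn_ord j; lia.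
by rewrite (bool_neq_negb ta) => _; apply: imset_f.
Qed.

Lemma inl_orient_outdeg_xrow i : outdeg inl_orient (Some (a, i)) <= k.
Proof.
have [i0|i0] := eqVneq (i : nat) 0.
  by apply: (@inl_orient_outdeg_in _ _ (Some (~~ a, i))); apply: inl_orient_y0_x0; rewrite i0.
have k0 : 0 < k by apply: leq_ltn_trans (ltn_ord i).
apply: (@inl_orient_outdeg_in _ _ (Some (a, Ordinal k0))).
rewrite /inl_orient /= (negbTE i0) !eqxx /adj_code /= eqxx /= andbT.
apply/andP; split; first by apply/eqP => -[] /(f_equal val) /= i0'; move: i0; rewrite -i0'.
by have := ltn_ord i; move/eqP: i0; lia.
Qed.

Lemma inl_orient_outdeg_yrow i : outdeg inl_orient (Some (~~ a, i)) < maxn 3 k.+1.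
Proof.
have [k_le1|k_gt1] := leqP k 1.
  apply: leq_ltn_trans (@outdeg_le_nbrs _ inl_orient (@adj_code k) _ _) _ => [d /andP[] //|].
  by apply: leq_ltn_trans (card_adj_code_Some _ _) _; lia.
apply: leq_trans (leq_maxr 3 k.+1); rewrite ltnS.
have [i0|i0] := eqVneq (i : nat) 0; last first.
  by apply: (@inl_orient_outdeg_in _ _ (Some (a, i))); apply: inl_orient_column.
apply: (@inl_orient_outdeg_in _ _ (Some (~~ a, Ordinal k_gt1))).
rewrite /inl_orient /= i0 /adj_code /= !eqxx /= andbT [~~ a == a]eq_sym eqb_negbF ltnSn andbT.
by apply/eqP => -[] /(f_equal val) /=; rewrite i0.
Qed.

Lemma inl_orient_budget p c : maxn 3 k.+1 <= p ->
  1 + outdeg inl_orient c <= (if inl a \in ends c then k.+1 else p).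
Proof.
move=> p_ge; case: c => [[t i]|]; rewrite !inE /=; last first.
  by case: (a); rewrite /= add1n ltnS inl_orient_outdeg_None.
have [->|ta] := eqVneq t a; first by rewrite eqxx add1n ltnS inl_orient_outdeg_xrow.
rewrite (bool_neq_negb ta); have -> : (inl a == inl (~~ a) :> bool + 'I_k) = false by case: (a).
by rewrite add1n (leq_trans (inl_orient_outdeg_yrow i)).
Qed.

Lemma edge_orientable_inl p :
  maxn 3 k.+1 <= p -> f_edge_orientable (Gk k) (f_pv (Gk k) p (inl a)).
Proof.
move=> p_ge; exists (relabel (@code_of k) inl_orient); split; [|split].
- exact (orientation_relabel (@code_ofK k) (@line_graph_edge_of k) inl_orient_orientation).
- exact (kernel_perfect_relabel (@edge_ofK k) (@code_ofK k) inl_orient_kernel_perfect).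
- move=> e; rewrite (outdeg_relabel (@edge_ofK k) (@code_ofK k)) -{2}(code_ofK e).
  by rewrite /f_pv /= deg_inl; apply: inl_orient_budget.
Qed.

End InlOrientation.

Definition tri_rank (c : code 1) : nat := if c is Some (t, _) then t else 2.

Definition tri_orient : rel (code 1) := [rel c d | adj_code c d && (tri_rank d < tri_rank c)].

Lemma tri_orient_orientation : orientation (@adj_code 1) tri_orient.
Proof.
apply: rank_orientation => [c d|]; first by rewrite adj_codeC.
move=> [[t i]|] [[t' j]|] //; rewrite !ord1 /adj_code /=; last by case: t'.
  by case: t t' => -[]; rewrite ?eqxx.
by case: t.
Qed.

Lemma tri_budget p (i : 'I_1) c :
  3 <= p -> 1 + outdeg tri_orient c <= (if inr i \in ends c then 2 else p).
Proof.
move=> p3; case: c => [[t j]|]; rewrite !inE /= ?ord1 ?eqxx ?orbT /=.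
  rewrite add1n ltnS -ltnS; apply: leq_trans (card_adj_code_Some t ord0).
  apply: (@outdeg_lt_nbrs _ tri_orient (@adj_code 1) _ None) => [d /andP[] //|//|].
  by case: t.
apply: leq_trans p3; rewrite add1n ltnS.
apply: leq_trans (_ : #|[set~ (None : code 1)]| <= 2).
  by apply/subset_leq_card/subsetP => -[d|]; rewrite !inE.
by rewrite cardsC1 card_option card_prod card_bool card_ord.
Qed.

Lemma edge_orientable_inr p (i : 'I_1) :
  3 <= p -> f_edge_orientable (Gk 1) (f_pv (Gk 1) p (inr i)).
Proof.
move=> p3; exists (relabel (@code_of 1) tri_orient); split; [|split].
- exact (orientation_relabel (@code_ofK 1) (@line_graph_edge_of 1) tri_orient_orientation).
- have tri_kp : kernel_perfect tri_orient.
    by apply: (@rank_kernel_perfect _ _ tri_rank) => c d /andP[].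
  exact (kernel_perfect_relabel (@edge_ofK 1) (@code_ofK 1) tri_kp).
- move=> e; rewrite (outdeg_relabel (@edge_ofK 1) (@code_ofK 1)) -{2}(code_ofK e).
  by rewrite /f_pv /= deg_inr; apply: tri_budget.
Qed.

Theorem mainTheorem16 (k : nat) (v : (bool + 'I_k)%type) (p : nat) :
  1 <= k ->
  (forall w : (bool + 'I_k)%type, deg (Gk k) w <= deg (Gk k) v) ->
  maxn 3 (maxdeg (Gk k)) <= p ->
  f_edge_orientable (Gk k) (f_pv (Gk k) p v).
Proof.
move=> _ v_max; rewrite geq_max => /andP[p3 p_maxdeg].
have maxdeg_ge : k.+1 <= maxdeg (Gk k).
  by rewrite -(deg_inl k true); apply: (@leq_bigmax _ (deg (Gk k))).
case: v v_max => [a|i] v_max.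
  by apply: edge_orientable_inl; rewrite geq_max p3 (leq_trans maxdeg_ge).
have k1 : k = 1 by have := ltn_ord i; have := v_max (inl true); rewrite deg_inl deg_inr; lia.
by subst k; apply: edge_orientable_inr.
Qed.
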